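(* Let $\mathfrak g\subset\mathfrak{gl}(V,V_* )$ be a subalgebra which is a union of reductive subalgebras, i.e. $\mathfrak g=\bigcup_n\mathfrak g_n$ for nested finite-dimensional reductive Lie algebras $\mathfrak g_n\subset\mathfrak g_{n+1}$. Then the linear nilradical $\mathfrak n_{\mathfrak g}$ is contained in the center $\mathfrak z(\mathfrak g)$ of $\mathfrak g$.
   Context: Ground field $\mathbb C$. $V$, $V_*$ are countable-dimensional vector spaces with a nondegenerate pairing $V\times V_*\to\mathbb C$; $\mathfrak{gl}(V,V_* )=V\otimes V_*$ with bracket coming from the associative product $(v\otimes w)(v'\otimes w')=\langle v',w\rangle v\otimes w'$, acting on $V$ by $(v\otimes w)u=\langle u,w\rangle v$. The locally solvable radical of a locally finite Lie algebra is its largest locally solvable ideal (locally solvable: every finite subset lies in a finite-dimensional solvable subalgebra). For $\mathfrak g\subset\mathfrak{gl}(V,V_* )$ the linear nilradical $\mathfrak n_{\mathfrak g}$ is the set of elements of the locally solvable radical of $\mathfrak g$ which are nilpotent endomorphisms of $V$. *)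

From HB Require Import structures.
From mathcomp Require Import all_boot all_order all_algebra.
Set Implicit Arguments.
Unset Strict Implicit.
Unset Printing Implicit Defensive.
Import Order.TTheory GRing.Theory Num.Theory.
Local Open Scope ring_scope.

(* Endomorphisms of V are modelled as functions V -> V; an element of
   gl(V,V_* ) = V (x) V_* is identified with the (finite-rank) endomorphism
   of V it induces (this identification is injective since the pairing is
   nondeg_pairing, and the associative product corresponds to composition). *)

Section LieDefs.
Variables (C : numClosedFieldType) (V : lmodType C).

Definition endo := V -> V.

Definition lie (x y : endo) : endo := fun u => x (y u) - y (x u).

Definition zero_endo : endo := fun _ => 0.

Definition lincomb (n : nat) (a : 'I_n -> C) (e : 'I_n -> endo) : endo :=
  fun u => \sum_(i < n) a i *: e i u.

Definition incl (A B : endo -> Prop) : Prop := forall x, A x -> B x.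

Definition in_span (A : endo -> Prop) (x : endo) : Prop :=
  exists n (a : 'I_n -> C) (e : 'I_n -> endo),
    (forall i, A (e i)) /\ x = lincomb a e.

Definition is_subspace (A : endo -> Prop) : Prop :=
  forall n (a : 'I_n -> C) (e : 'I_n -> endo),
    (forall i, A (e i)) -> A (lincomb a e).

Definition is_subalgebra (A : endo -> Prop) : Prop :=
  is_subspace A /\ forall x y, A x -> A y -> A (lie x y).

Definition fin_dim (A : endo -> Prop) : Prop :=
  exists n (e : 'I_n -> endo), forall x,
    A x <-> exists a : 'I_n -> C, x = lincomb a e.

Definition is_ideal (S I : endo -> Prop) : Prop :=
  incl I S /\ is_subspace I /\
  forall x y, S x -> I y -> I (lie x y).

Fixpoint derived (A : endo -> Prop) (k : nat) : endo -> Prop :=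
  match k with
  | 0 => A
  | k'.+1 => in_span (fun z => exists x y,
               derived A k' x /\ derived A k' y /\ z = lie x y)
  end.

Definition lie_solvable (A : endo -> Prop) : Prop :=
  exists k, forall x, derived A k x -> x = zero_endo.

Definition lie_center (S : endo -> Prop) (x : endo) : Prop :=
  S x /\ forall y, S y -> lie x y = zero_endo.

(* finite-dimensional lie_reductive Lie algebra: its radical (largest lie_solvable
   ideal) equals its lie_center; equivalently every lie_solvable ideal lies in the
   lie_center (the lie_center being a lie_solvable ideal). *)
Definition lie_reductive (S : endo -> Prop) : Prop :=
  forall I, is_ideal S I -> lie_solvable I -> incl I (lie_center S).

Definition loc_solvable (A : endo -> Prop) : Prop :=
  forall n (e : 'I_n -> endo), (forall i, A (e i)) ->
    exists B, incl B A /\ fin_dim B /\ is_subalgebra B /\ lie_solvable B /\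
              forall i, B (e i).

Definition is_loc_solv_radical (g R : endo -> Prop) : Prop :=
  is_ideal g R /\ loc_solvable R /\
  forall I, is_ideal g I -> loc_solvable I -> incl I R.

Definition nilpotent_endo (x : endo) : Prop :=
  exists k, forall u, iter k x u = 0.

End LieDefs.

Section PairingDefs.
Variables (C : numClosedFieldType) (V W : lmodType C).

Definition bilinear_pairing (p : V -> W -> C) : Prop :=
  (forall (a : C) u u' w, p (a *: u + u') w = a * p u w + p u' w) /\
  (forall (a : C) u w w', p u (a *: w + w') = a * p u w + p u w').

Definition nondeg_pairing (p : V -> W -> C) : Prop :=
  (forall u, (forall w, p u w = 0) -> u = 0) /\
  (forall w, (forall u, p u w = 0) -> w = 0).

(* gl(V,V_* ) = V (x) V_* acting on V by (v (x) w) u = <u,w> v *)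
Definition in_glVV (p : V -> W -> C) (x : V -> V) : Prop :=
  exists s : seq (V * W), forall u, x u = \sum_(c <- s) p u c.2 *: c.1.

End PairingDefs.

Definition countable_dim (C : numClosedFieldType) (V : lmodType C) : Prop :=
  exists e : nat -> V,
    (forall n (a : 'I_n -> C), \sum_(i < n) a i *: e i = 0 ->
        forall i, a i = 0) /\
    (forall v, exists n (a : 'I_n -> C), v = \sum_(i < n) a i *: e i).

From HB Require Import structures.
From mathcomp Require Import all_boot all_order all_algebra.
From Stdlib Require Import Classical FunctionalExtensionality.
Set Implicit Arguments. Unset Strict Implicit.
Import Order.TTheory GRing.Theory Num.Theory.
Local Open Scope ring_scope.

(* We show the stronger fact that the whole locally solvable
   radical R of g = \bigcup_n g_n is central; the linear nilradical, being a
   subset of R, is then central as well.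
   Fix a stage g_m.  The intersection I = R \cap g_m is an ideal of g_m,
   because R is an ideal of g.  As a subspace of the finite-dimensional
   g_m, the space I is spanned by finitely many of its elements; local
   solvability of R puts these in a finite-dimensional solvable subalgebra
   B of R, and then I \subset B is solvable too.  Reductivity of g_m forces
   I into the center of g_m.  Finally two elements x \in R and y \in g both
   lie in some common stage g_m, so [x, y] = 0.
   The file first collects facts on subspaces of endomorphisms and on the
   derived series, then proves that a subspace of a finite-dimensional
   space is finitely spanned (via coordinates in 'rV_k and a maximal
   subspace argument), and finally carries out the argument above. *)

Section Subspaces.
Variables (C : numClosedFieldType) (V : lmodType C).
Implicit Types (A B I : endo V -> Prop).

Lemma subspace0 A : is_subspace A -> A (fun _ => 0).
Proof.
move=> HA; have := HA 0%N (fun _ => 0) (fun _ _ => 0) (fun i => False_ind _ (notF (ltn_ord i))).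
suff -> : lincomb (fun _ : 'I_0 => (0 : C)) (fun _ _ => (0 : V)) = fun _ => 0 by [].
by apply: functional_extensionality => u; rewrite /lincomb big_ord0.
Qed.

Lemma subspaceD A : is_subspace A -> forall (a : C) f h, A f -> A h ->
  A (fun u => a *: f u + h u).
Proof.
move=> HA a f h Af Ah.
pose c (i : 'I_2) := if i == ord0 then a else 1.
pose F (i : 'I_2) := if i == ord0 then f else h.
have := HA 2%N c F (fun i => if i == ord0 as b return A (if b then f else h) then Af else Ah).
suff -> : lincomb c F = fun u => a *: f u + h u by [].
apply: functional_extensionality => u.
by rewrite /lincomb big_ord_recr big_ord1 /= /c /F /= scale1r.
Qed.

Lemma derived_mono A B : incl A B -> forall k, incl (derived A k) (derived B k).
Proof.
move=> AB; elim=> [|k IH] //= x [n [a [e [He ->]]]].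
exists n, a, e; split=> // i.
have [x1 [y1 [h1 [h2 ->]]]] := He i.
by exists x1, y1; split; [apply: IH|split; [apply: IH|]].
Qed.

Definition lc k (e : 'I_k -> endo V) (r : 'rV[C]_k) : endo V :=
  lincomb (fun i => r 0 i) e.

Lemma lc_row k (e : 'I_k -> endo V) (a : 'I_k -> C) :
  lincomb a e = lc e (\row_i a i).
Proof.
apply: functional_extensionality => u; rewrite /lc /lincomb.
by apply: eq_bigr => i _; rewrite mxE.
Qed.

Lemma lc0 k (e : 'I_k -> endo V) : lc e 0 = fun _ => 0.
Proof.
apply: functional_extensionality => u; rewrite /lc /lincomb big1 // => i _.
by rewrite mxE scale0r.
Qed.

Lemma lcD k (e : 'I_k -> endo V) (a : C) r s :
  lc e (a *: r + s) = fun u => a *: lc e r u + lc e s u.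
Proof.
apply: functional_extensionality => u.
rewrite /lc /lincomb scaler_sumr -big_split /=.
by apply: eq_bigr => i _; rewrite !mxE scalerDl scalerA.
Qed.

Lemma lc_sum k (e : 'I_k -> endo V) n (c : 'I_n -> C) (s : 'I_n -> 'rV[C]_k) :
  lc e (\sum_j c j *: s j) = lincomb c (fun j => lc e (s j)).
Proof.
apply: functional_extensionality => u; rewrite /lc /lincomb.
under eq_bigr => i _ do rewrite summxE scaler_suml.
rewrite exchange_big /=; apply: eq_bigr => j _; rewrite scaler_sumr.
by apply: eq_bigr => i _; rewrite mxE scalerA.
Qed.

End Subspaces.

Lemma bounded_nat_max (Q : nat -> Prop) b : Q 0%N ->
  (forall n, Q n -> (n <= b)%N) -> exists n, Q n /\ forall m, Q m -> (m <= n)%N.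
Proof.
move=> Q0 Qb; apply: NNPP => no_max.
have unbounded j : exists n, Q n /\ (j <= n)%N.
  elim: j => [|j [n [Qn jn]]]; first by exists 0%N.
  apply: NNPP => no_above; apply: no_max; exists n; split=> // m Qm.
  rewrite leqNgt; apply/negP => nm; apply: no_above; exists m.
  by split=> //; apply: leq_ltn_trans jn nm.
have [n [Qn bn]] := unbounded b.+1.
by have := Qb _ Qn; rewrite leqNgt (leq_trans (ltnSn b) bn).
Qed.

(* Every subspace P of 'rV_k (given as a proposition) is spanned by finitely
   many of its elements: take a vspace of maximal dimension inside P; by
   maximality it already contains all of P. *)
Lemma rV_subspace_fin_span (C : fieldType) k (P : 'rV[C]_k -> Prop) : P 0 ->
  (forall a r s, P r -> P s -> P (a *: r + s)) ->
  exists d (b : 'I_d -> 'rV[C]_k), (forall i, P (b i)) /\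
    forall r, P r -> exists c : 'I_d -> C, r = \sum_j c j *: b j.
Proof.
move=> P0 PD.
pose Q n := exists U : {vspace 'rV[C]_k}, (forall u, u \in U -> P u) /\ \dim U = n.
have [n [[U [UP <-]] U_max]] : exists n, Q n /\ forall m, Q m -> (m <= n)%N.
  apply: (@bounded_nat_max Q (\dim (fullv : {vspace 'rV[C]_k}))).
    exists 0%VS; split; last by rewrite dimv0.
    by move=> u; rewrite memv0 => /eqP ->.
  by move=> m [U' [_ <-]]; apply/dimvS/subvf.
exists (\dim U), (fun i => (vbasis U)`_i); split.
  by move=> i; apply/UP/vbasis_mem/mem_nth; rewrite size_tuple.
move=> r Pr; suff rU : r \in U.
  by exists (fun i => coord (vbasis U) i r); apply: coord_vbasis.
apply: NNPP => rNU.
have UrP u : u \in (U + <[r]>)%VS -> P u.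
  move=> /memv_addP [y yU [z /vlineP [a ->] ->]].
  by rewrite addrC; apply: PD => //; apply: UP.
have := U_max _ (ex_intro _ _ (conj UrP erefl)).
rewrite (geq_leqif (dimv_leqif_sup (addvSl U <[r]>))) => /subvP UrU.
by apply/rNU/UrU/memv_addP; exists 0; [exact: mem0v | exists r; [exact: memv_line | rewrite add0r]].
Qed.

Section FiniteSpan.
Variables (C : numClosedFieldType) (V : lmodType C).
Implicit Types (A I R : endo V -> Prop).

Lemma subspace_fin_span A I : fin_dim A -> incl I A -> is_subspace I ->
  exists d (b : 'I_d -> endo V), (forall i, I (b i)) /\
    forall x, I x -> exists c : 'I_d -> C, x = lincomb c b.
Proof.
move=> A_fd IA Isub; have [k [e Ae]] := A_fd.
pose P r := I (lc e r).
have [d [b [Pb b_span]]] : exists d (b : 'I_d -> 'rV[C]_k), (forall i, P (b i)) /\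
    forall r, P r -> exists c : 'I_d -> C, r = \sum_j c j *: b j.
  apply: rV_subspace_fin_span; first by rewrite /P lc0; apply: subspace0.
  by move=> a r s Pr Ps; rewrite /P lcD; apply: subspaceD.
exists d, (fun j => lc e (b j)); split=> // x Ix.
have [a xE] := (Ae x).1 (IA x Ix).
have Pa : P (\row_i a i) by rewrite /P -lc_row -xE.
have [c aE] := b_span _ Pa.
by exists c; rewrite xE lc_row aE lc_sum.
Qed.

Lemma fin_spanned_in_loc_solvable R I d (b : 'I_d -> endo V) :
  loc_solvable R -> (forall i, R (b i)) ->
  (forall x, I x -> exists c : 'I_d -> C, x = lincomb c b) -> lie_solvable I.
Proof.
move=> Rloc Rb I_span.
have [B [_ [_ [[Bsub _] [[k Bk] Bb]]]]] := Rloc d b Rb.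
have IB : incl I B by move=> x /I_span [c ->]; apply: Bsub.
by exists k => x /(derived_mono IB); apply: Bk.
Qed.

End FiniteSpan.

Section UnionOfReductive.
Variables (C : numClosedFieldType) (V : lmodType C).
Variables (g : endo V -> Prop) (gs : nat -> endo V -> Prop) (R : endo V -> Prop).
Hypothesis gs_fd : forall n, fin_dim (gs n).
Hypothesis gs_sub : forall n, is_subalgebra (gs n).
Hypothesis gs_red : forall n, lie_reductive (gs n).
Hypothesis gs_nest : forall n, incl (gs n) (gs n.+1).
Hypothesis g_union : forall x, g x <-> exists n, gs n x.
Hypothesis R_radical : is_loc_solv_radical g R.

Lemma gs_mono a b : (a <= b)%N -> incl (gs a) (gs b).
Proof.
move=> /subnK <-; elim: (b - a)%N => [|d IH] //= x gx.
by rewrite addSn; apply/gs_nest/IH.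
Qed.

Definition radical_stage m (x : endo V) : Prop := R x /\ gs m x.

Lemma radical_stage_ideal m : is_ideal (gs m) (radical_stage m).
Proof.
have [[_ [Rsub Rid]] _] := R_radical.
split; first by move=> x [].
split.
  move=> n a e He; split; first by apply: Rsub => i; case: (He i).
  by apply: (gs_sub m).1 => i; case: (He i).
move=> x y gx [Ry gy]; split; last by apply: (gs_sub m).2.
by apply: Rid => //; apply/g_union; exists m.
Qed.

(* R \cap g_m is solvable: as a subspace of the finite-dimensional g_m it is
   finitely spanned, by elements of the locally solvable R. *)
Lemma radical_stage_solvable m : lie_solvable (radical_stage m).
Proof.
have [_ [Rloc _]] := R_radical.
have [Iid [Isub _]] := radical_stage_ideal m.
have [d [b [Ib I_span]]] := subspace_fin_span (gs_fd m) Iid Isub.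
by apply: (fin_spanned_in_loc_solvable Rloc _ I_span) => i; case: (Ib i).
Qed.

Lemma radical_central x : R x -> lie_center g x.
Proof.
have [[Rg _] _] := R_radical.
move=> Rx; split=> [|y gy]; first exact: Rg.
have [n gnx] := (g_union x).1 (Rg x Rx).
have [n' gny] := (g_union y).1 gy.
pose m := maxn n n'.
have gmx : gs m x := gs_mono (leq_maxl n n') gnx.
have gmy : gs m y := gs_mono (leq_maxr n n') gny.
have Im_central := gs_red (radical_stage_ideal m) (radical_stage_solvable m).
by have [_ ->] := Im_central x (conj Rx gmx).
Qed.

End UnionOfReductive.

Theorem lemma2p3
  (C : numClosedFieldType) (V W : lmodType C) (p : V -> W -> C)
  (Hbil : bilinear_pairing p) (Hnd : nondeg_pairing p)
  (HV : countable_dim V) (HW : countable_dim W)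
  (g : endo V -> Prop) (gs : nat -> endo V -> Prop)
  (Hg_gl : forall x, g x -> in_glVV p x)
  (Hg_sub : is_subalgebra g)
  (Hgs_fd : forall n, fin_dim (gs n))
  (Hgs_sub : forall n, is_subalgebra (gs n))
  (Hgs_red : forall n, lie_reductive (gs n))
  (Hgs_nest : forall n, incl (gs n) (gs n.+1))
  (Hg_union : forall x, g x <-> exists n, gs n x)
  (R : endo V -> Prop) (HR : is_loc_solv_radical g R) :
  forall x, R x -> nilpotent_endo x -> lie_center g x.
Proof.
move=> x Rx _.
exact: (radical_central Hgs_fd Hgs_sub Hgs_red Hgs_nest Hg_union HR Rx).
Qed.
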